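(* Let $p$ be a prime and let $\rho\in[2,p-1]$. Then $$t_\rho(\mathbb{Z}_p)=s_\rho(\mathbb{Z}_p)=\left\lfloor\frac{p-2}{\rho-1}\right\rfloor+1.$$
   Context: Groups are written additively; $\mathbb{Z}_p=\mathbb{Z}/p\mathbb{Z}$. For $A\subseteq G$ let $A_0:=A\cup\{0\}$ and $\langle A\rangle^+_\rho:=\rho A_0=\{a_1+\dots+a_\rho:a_i\in A_0\}$. $\operatorname{diam}^+_A(G):=\min\{\rho\in\mathbb{N}_0:\langle A\rangle^+_\rho=G\}$ ($\min\varnothing=\infty$). The period of $S\subseteq G$ is $\pi(S):=\{g\in G:S+g=S\}$; $S$ is aperiodic if $\pi(S)=\{0\}$. A subset $A\subseteq G$ is $\rho$-maximal if it is maximal under inclusion subject to $\operatorname{diam}^+_A(G)\ge\rho$, i.e. subject to $\langle A\rangle^+_{\rho-1}\neq G$. With the convention $\max\varnothing=0$: $s_\rho(G):=\max\{|A|: A\subseteq G,\ \rho\le\operatorname{diam}^+_A(G)<\infty\}$ and $t_\rho(G):=\max\{|A|: A \text{ is an aperiodic } \rho\text{-maximal generating set for } G\}$. *)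

From HB Require Import structures.
From mathcomp Require Import all_boot all_order all_algebra.
Set Implicit Arguments. Unset Strict Implicit. Unset Printing Implicit Defensive.
Import GRing.Theory.
Local Open Scope ring_scope.

Section Defs.
Variable G : finZmodType.

Definition A0 (A : {set G}) : {set G} := 0 |: A.

(* <A>^+_rho := rho A_0 (with 0 A_0 = {0}) *)
Fixpoint sumset (rho : nat) (A : {set G}) : {set G} :=
  match rho with
  | O => [set 0]
  | S n => [set x + y | x in sumset n A, y in A0 A]
  end.

(* rho <= diam^+_A(G) : no smaller number of summands covers G *)
Definition diam_ge (A : {set G}) (rho : nat) : Prop :=
  forall n : nat, (n < rho)%N -> sumset n A <> [set: G].

(* diam^+_A(G) < infinity *)
Definition diam_finite (A : {set G}) : Prop :=
  exists n : nat, sumset n A = [set: G].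

Definition period (S : {set G}) : {set G} :=
  [set g | [set x + g | x in S] == S].

Definition aperiodic (S : {set G}) : Prop := period S = [set 0].

Definition generates (A : {set G}) : Prop :=
  forall H : {set G}, 0 \in H -> (forall x y, x \in H -> y \in H -> x - y \in H) ->
    A \subset H -> H = [set: G].

Definition rho_maximal (rho : nat) (A : {set G}) : Prop :=
  diam_ge A rho /\ forall B : {set G}, A \subset B -> diam_ge B rho -> B = A.

(* N is the maximum of |A| over A satisfying P, with max of empty = 0 *)
Definition is_max_card (P : {set G} -> Prop) (N : nat) : Prop :=
  ((exists A, P A /\ #|A| = N) \/ ((forall A, ~ P A) /\ N = 0%N)) /\
  (forall A, P A -> (#|A| <= N)%N).

Definition s_rho_is (rho N : nat) : Prop :=
  is_max_card (fun A => diam_ge A rho /\ diam_finite A) N.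

Definition t_rho_is (rho N : nat) : Prop :=
  is_max_card (fun A => aperiodic A /\ rho_maximal rho A /\ generates A) N.

End Defs.

Definition Zp_finZmod (p : nat) : finZmodType := 'Z_p.

(* If diam^+_A >= rho, then (rho - 1) A_0 is a proper subset of Z_p, while
   iterating Cauchy-Davenport gives |(rho - 1) A_0| >= (rho - 1)(|A_0| - 1) + 1;
   hence |A| <= |A_0| <= (p - 2) / (rho - 1) + 1.  The interval {0, ..., k} with
   k = (p - 2) / (rho - 1) attains this: its (rho - 1)-fold sumset lies in
   {0, ..., (rho - 1) k} and misses p - 1, it generates Z_p because it contains 1,
   it is aperiodic because it is a proper subset containing 0, and it is
   rho-maximal by the upper bound itself. *)

From HB Require Import structures.
From mathcomp Require Import all_boot all_order all_algebra zify.
Set Implicit Arguments. Unset Strict Implicit. Unset Printing Implicit Defensive.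
Import GRing.Theory.
Local Open Scope ring_scope.

Section Sumsets.
Variable G : finZmodType.

Definition addset (X Y : {set G}) : {set G} := [set x + y | x in X, y in Y].

Lemma card_translate (X : {set G}) (c : G) : #|[set x + c | x in X]| = #|X|.
Proof. by apply: card_imset; apply: addIr. Qed.

Lemma card_addset_ge (X Y : {set G}) (y : G) : y \in Y -> (#|X| <= #|addset X Y|)%N.
Proof.
move=> Yy; rewrite -(card_translate X y); apply: subset_leq_card.
by apply/subsetP => _ /imsetP[x Xx ->]; apply/imset2P; exists x y.
Qed.

(* The pair (X :|: (Y + c), Y :&: (X - c)) is Dyson's e-transform of (X, Y). *)
Lemma addset_etrans_sub (X Y : {set G}) (c : G) :
  addset (X :|: [set y + c | y in Y]) [set y in Y | y + c \in X] \subset addset X Y.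
Proof.
apply/subsetP => _ /imset2P[a b Xa Yb ->]; move: Yb; rewrite inE => /andP[Yb Xb].
case/setUP: Xa => [Xa|/imsetP[v Yv ->]]; first by apply/imset2P; exists a b.
by apply/imset2P; exists (b + c) v; rewrite // -addrA addrC [c + b]addrC.
Qed.

Lemma card_etrans (X Y : {set G}) (c : G) :
  (#|X :|: [set (y + c)%R | y in Y]| + #|[set y in Y | (y + c)%R \in X]|
   = #|X| + #|Y|)%N.
Proof.
rewrite -(card_translate Y c) -(cardsUI X); congr (_ + _)%N.
rewrite -(card_translate _ c); apply: eq_card => z.
apply/imsetP/setIP => [[v]|[Xz /imsetP[v Yv ez]]].
  by rewrite inE => /andP[Yv Xv] ->; split; last apply: imset_f.
by exists v; rewrite // inE Yv -ez.
Qed.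

Lemma mem0_A0 (A : {set G}) : 0 \in A0 A.
Proof. exact: setU11. Qed.

Lemma mem0_sumset n (A : {set G}) : 0 \in sumset n A.
Proof.
elim: n => [|n IH] /=; first by rewrite inE.
by apply/imset2P; exists 0 0; rewrite ?addr0 ?mem0_A0.
Qed.

Lemma sumset_subS n (A : {set G}) : sumset n A \subset sumset n.+1 A.
Proof.
by apply/subsetP => z zS; apply/imset2P; exists z 0; rewrite ?addr0 ?mem0_A0.
Qed.

End Sumsets.

Section PrimeCyclic.
Variable p : nat.
Hypothesis p_pr : prime p.
Local Notation G := (Zp_finZmod p).

Let p_gt1 : (1 < p)%N := prime_gt1 p_pr.

Lemma Zp_val_add (x y : G) : nat_of_ord (x + y) = ((x + y) %% p)%N.
Proof. by rewrite /=; congr (_ %% _)%N; apply: Zp_cast. Qed.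

Lemma Zp_val_mulrn (x : G) n : nat_of_ord (x *+ n) = ((x * n) %% p)%N.
Proof. by rewrite Zp_mulrn /=; congr (_ %% _)%N; apply: Zp_cast. Qed.

Lemma Zp_val_lt (x : G) : (x < p)%N.
Proof. by rewrite -[x]addr0 Zp_val_add addn0 ltn_mod ltnW. Qed.

Lemma card_Zp_setT : #|[set: G]| = p.
Proof. by rewrite cardsT card_ord Zp_cast. Qed.

Lemma Zp_mulrn_eq0 (d : G) n : d != 0 -> (n < p)%N -> (d *+ n == 0) = (n == 0%N).
Proof.
move=> d0 lt_np; have d_gt0 : (0 < d)%N by rewrite lt0n.
rewrite -val_eqE /= Zp_val_mulrn -/(p %| d * n)%N Euclid_dvdM // gtnNdvd ?Zp_val_lt //=.
by case: n lt_np => [|n] lt_np; rewrite ?dvdn0 ?gtnNdvd.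
Qed.

Lemma Zp_mulrn_inj (d : G) : d != 0 -> injective (fun n : 'I_p => d *+ n).
Proof.
move=> d0 m n /= eq_mn; apply: val_inj => /=.
wlog le_mn : m n eq_mn / (m <= n)%N.
  by move=> wlog_mn; case: (leqP m n) => [|/ltnW] le; [|apply/esym]; apply: wlog_mn.
have : d *+ (n - m) == 0 by rewrite mulrnBr // eq_mn subrr.
rewrite Zp_mulrn_eq0 //; last by rewrite (leq_ltn_trans (leq_subr _ _)).
by rewrite subn_eq0 => le_nm; apply/anti_leq; rewrite le_mn le_nm.
Qed.

(* A nonzero element of a group of prime order generates it. *)
Lemma Zp_translate_closed (S : {set G}) (x0 d : G) : x0 \in S -> d != 0 ->
  (forall x, x \in S -> x + d \in S) -> S = [set: G].
Proof.
move=> Sx0 d0 S_cl.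
have S_mulrn n : x0 + d *+ n \in S.
  by elim: n => [|n IH]; rewrite ?mulr0n ?addr0 // mulrS addrCA addrC S_cl.
apply/eqP; rewrite eqEcard subsetT card_Zp_setT /=.
have orbit_inj := inj_comp (addrI x0) (Zp_mulrn_inj d0).
rewrite -[X in (X <= _)%N]card_ord -(card_imset _ orbit_inj).
by apply/subset_leq_card/subsetP => _ /imsetP[n _ ->]; apply: S_mulrn.
Qed.

(* Induction on #|Y| through the e-transform, with c chosen so that the new Y
   keeps y1 but loses y; if no such c exists, X is stable under y2 - y1. *)
Theorem cauchy_davenport (X Y : {set G}) : X != set0 -> Y != set0 ->
  addset X Y = [set: G] \/ (#|X| + #|Y| <= #|addset X Y| + 1)%N.
Proof.
move: {2}#|Y| (leqnn #|Y|) => n; elim: n X Y => [|n IH] X Y leYn X0 Y0.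
  by move: leYn; rewrite leqn0 cards_eq0 (negbTE Y0).
case: (leqP #|Y| 1) => [leY1|/card_gt1P[y1 [y2 [Yy1 Yy2 y12]]]].
  have [y Yy] := set0Pn _ Y0.
  by right; rewrite leq_add // (card_addset_ge _ Yy).
have [X_cl|] := boolP [forall x in X, forall y in Y, x + (y - y1) \in X].
  have [x0 Xx0] := set0Pn _ X0.
  have XT : X = [set: G].
    apply: (Zp_translate_closed Xx0 (_ : y2 - y1 != 0)) => [|x Xx].
      by rewrite subr_eq0 eq_sym.
    by move/forall_inP/(_ x Xx)/forall_inP: X_cl; apply.
  left; apply/eqP; rewrite eqEsubset subsetT; apply/subsetP => z _.
  by apply/imset2P; exists (z - y1) y1; rewrite ?XT ?inE ?subrK.
case/forall_inPn => x Xx /forall_inPn[y Yy Xxy].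
pose c := x - y1.
have shift v : v + c = x + (v - y1) by rewrite addrCA addrA.
pose X' := X :|: [set v + c | v in Y]; pose Y' := [set v in Y | v + c \in X].
have Y'_proper : Y' \proper Y.
  apply/properP; split; first by apply/subsetP => v /setIdP[].
  by exists y => //; rewrite inE Yy shift (negbTE Xxy).
have X'0 : X' != set0 by apply/set0Pn; exists x; rewrite inE Xx.
have Y'0 : Y' != set0 by apply/set0Pn; exists y1; rewrite inE Yy1 shift subrr addr0.
have leY'n : (#|Y'| <= n)%N by rewrite -ltnS (leq_trans (proper_card Y'_proper)).
have sub := addset_etrans_sub X Y c; have card := card_etrans X Y c.
case: (IH X' Y' leY'n X'0 Y'0) => [X'Y'T|le_X'Y'].
  by left; apply/eqP; rewrite eqEsubset subsetT -X'Y'T.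
by right; rewrite -card (leq_trans le_X'Y') // leq_add2r subset_leq_card.
Qed.

Lemma card_sumset_growth n (A : {set G}) :
  sumset n A = [set: G] \/ (n * (#|A0 A| - 1) + 1 <= #|sumset n A|)%N.
Proof.
elim: n => [|n IH]; first by right; rewrite mul0n cards1.
have [ST|le_n] := IH.
  by left; apply/eqP; rewrite eqEsubset subsetT -ST sumset_subS.
have A0_gt0 : (0 < #|A0 A|)%N by apply/card_gt0P; exists 0; apply: mem0_A0.
have [|||le_Sn] := @cauchy_davenport (sumset n A) (A0 A); try by [left].
- by apply/set0Pn; exists 0; apply: mem0_sumset.
- by apply/set0Pn; exists 0; apply: mem0_A0.
right; move: A0_gt0 le_n le_Sn; rewrite /= -/(addset _ _) mulSn.
move: (n * _)%N => m; move: #|A0 A| #|sumset n A| => a s; lia.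
Qed.

Lemma card_le_of_diam_ge rho (A : {set G}) : (2 <= rho)%N -> diam_ge A rho ->
  (#|A| <= (p - 2) %/ (rho - 1) + 1)%N.
Proof.
move=> rho_ge2 dA; have q_gt0 : (0 < rho - 1)%N by rewrite subn_gt0.
have lt_q : (rho - 1 < rho)%N by rewrite ltn_subrL (ltnW rho_ge2).
have lt_p : (#|sumset (rho - 1) A| < p)%N.
  have : sumset (rho - 1) A \proper [set: G] by rewrite properT; apply/eqP/dA.
  by move/proper_card; rewrite card_Zp_setT.
have [/(dA _ lt_q)//|grow] := card_sumset_growth (rho - 1) A.
have le_A : (#|A| <= #|A0 A|)%N by apply/subset_leq_card/subsetUr.
rewrite addnC -leq_subLR leq_divRL //.
rewrite (leq_trans (_ : _ <= (#|A0 A| - 1) * (rho - 1))%N) //.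
  by rewrite leq_mul2r leq_sub2r ?orbT.
by rewrite mulnC; lia.
Qed.

Definition Zp_interval (m : nat) : {set G} := [set x : G | (x <= m)%N].

Lemma card_Zp_interval m : (m < p)%N -> #|Zp_interval m| = m.+1.
Proof.
move=> lt_mp; have val_inord (i : 'I_m.+1) : nat_of_ord (inord i : G) = i.
  by rewrite inordK // Zp_cast // (leq_trans (ltn_ord i)).
have -> : Zp_interval m = [set inord i | i : 'I_m.+1].
  apply/setP => x; rewrite inE; apply/idP/imsetP => [le_xm|[i _ ->]].
    by exists (Ordinal (le_xm : (x < m.+1)%N)); rewrite //= inord_val.
  by rewrite val_inord -ltnS.
rewrite card_imset ?card_ord // => i j /(congr1 val).
by rewrite /= !val_inord => /val_inj.
Qed.

Lemma sumset_Zp_interval n m : (n * m < p)%N ->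
  sumset n (Zp_interval m) \subset Zp_interval (n * m).
Proof.
elim: n => [|n IH] lt_p /=; first by apply/subsetP => x; rewrite !inE => /eqP ->.
have le_nm : (n * m + m <= n.+1 * m)%N by rewrite mulSn addnC.
apply/subsetP => _ /imset2P[x y Sx Iy ->].
have /IH/subsetP/(_ x Sx) : (n * m < p)%N.
  by rewrite (leq_ltn_trans _ lt_p) // mulSn leq_addl.
have le_ym : (y <= m)%N by case/setU1P: Iy => [->|]; rewrite ?inE.
rewrite !inE Zp_val_add => le_xnm.
have le_xy : (x + y <= n.+1 * m)%N := leq_trans (leq_add le_xnm le_ym) le_nm.
by rewrite modn_small // (leq_ltn_trans le_xy).
Qed.

Section ExtremalInterval.
Variable rho : nat.
Hypothesis rho_range : (2 <= rho <= p.-1)%N.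

Local Notation k := ((p - 2) %/ (rho - 1))%N.
Local Notation I := (Zp_interval k).

Let q_gt0 : (0 < rho - 1)%N.
Proof. by case/andP: rho_range; rewrite subn_gt0. Qed.

Let k_gt0 : (0 < k)%N.
Proof. by rewrite divn_gt0 //; case/andP: rho_range; lia. Qed.

Let kq_le : (k * (rho - 1) <= p - 2)%N.
Proof. exact: leq_divM. Qed.

Let k_lt : (k.+1 < p)%N.
Proof. by have := leq_trans (leq_pmulr k q_gt0) kq_le; lia. Qed.

Lemma card_extremal_interval : #|I| = ((p - 2) %/ (rho - 1) + 1)%N.
Proof. by rewrite card_Zp_interval ?addn1 // ltnW. Qed.

Lemma extremal_interval_diam_ge : diam_ge I rho.
Proof.
move=> n lt_n_rho IT.
have le_nk : (n * k <= p - 2)%N.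
  by rewrite mulnC (leq_trans (leq_mul (leqnn k) _) kq_le) //; lia.
have lt_nk : (n * k < p)%N by lia.
have := subset_leq_card (sumset_Zp_interval lt_nk).
by rewrite IT card_Zp_setT card_Zp_interval //; lia.
Qed.

Lemma extremal_interval_diam_finite : diam_finite I.
Proof.
exists p; have [//|] := card_sumset_growth p I.
have -> : A0 I = I by apply/setUidPr; rewrite sub1set inE.
rewrite card_Zp_interval; last exact: ltnW.
rewrite subn1 succnK => grow.
have := leq_trans grow (subset_leq_card (subsetT _)).
by rewrite card_Zp_setT addn1 ltnNge leq_pmulr.
Qed.

Lemma extremal_interval_generates : generates I.
Proof.
move=> H H0 H_sub IsubH; pose d : G := inord 1.
have d_val : nat_of_ord d = 1%N by rewrite inordK // Zp_cast.
have d0 : d != 0 by rewrite -val_eqE /= d_val.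
have Hd : d \in H by apply: (subsetP IsubH); rewrite inE d_val.
apply: (Zp_translate_closed H0 d0) => x Hx.
by have := H_sub _ _ Hx (H_sub _ _ H0 Hd); rewrite sub0r opprK.
Qed.

Lemma extremal_interval_aperiodic : aperiodic I.
Proof.
apply/setP => z; rewrite !inE; apply/idP/idP => [/eqP Iz|/eqP ->].
  apply/contraT => z0; have I0 : 0 \in I by rewrite inE.
  have I_cl x : x \in I -> x + z \in I by rewrite -{2}Iz; apply: imset_f.
  have IT := Zp_translate_closed I0 z0 I_cl.
  have := card_Zp_interval (ltnW k_lt); rewrite IT card_Zp_setT => p_eq.
  by move: k_lt; rewrite -{1}p_eq ltnn.
apply/eqP/setP => x; apply/imsetP/idP => [[y Iy ->]|Ix]; first by rewrite addr0.
by exists x; rewrite ?addr0.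
Qed.

Lemma extremal_interval_rho_maximal : rho_maximal rho I.
Proof.
split=> [|B IB dB]; first exact: extremal_interval_diam_ge.
apply/eqP; rewrite eq_sym eqEcard IB card_extremal_interval.
by apply: card_le_of_diam_ge dB; case/andP: rho_range.
Qed.

End ExtremalInterval.

End PrimeCyclic.

Theorem corollary2p6 (p rho : nat) (hp : prime p) (hrho : (2 <= rho <= p.-1)%N) :
  t_rho_is (Zp_finZmod p) rho ((p - 2) %/ (rho - 1) + 1) /\
  s_rho_is (Zp_finZmod p) rho ((p - 2) %/ (rho - 1) + 1).
Proof.
have rho_ge2 : (2 <= rho)%N by case/andP: hrho.
pose I := Zp_interval p ((p - 2) %/ (rho - 1)).
have cardI := card_extremal_interval hp hrho.
split; split.
- left; exists I; split=> //; split; first exact: extremal_interval_aperiodic.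
  by split; [apply: extremal_interval_rho_maximal | apply: extremal_interval_generates].
- by move=> A [_ [[dA _] _]]; apply: card_le_of_diam_ge dA.
- left; exists I; split=> //.
  by split; [apply: extremal_interval_diam_ge | apply: extremal_interval_diam_finite].
- by move=> A [dA _]; apply: card_le_of_diam_ge dA.
Qed.
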